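(* A commutative Bezout domain $R$ is a commutative elementary divisor domain if and only if for all $a_1,a_2,b_1,b_2\in R$ with $(a_1,a_2)=(b_1,b_2)=1$ there exists $r\in R$ such that $b_1+rb_2=\alpha\beta$ for some $\alpha,\beta\in R$ with $(\alpha,\beta)=(a_1,\alpha)=(a_2,\beta)=1$.
   Context: A commutative Bezout domain is a commutative integral domain with $1\ne0$ in which every finitely generated ideal is principal; $(\cdot,\cdot)$ denotes a greatest common divisor. $R$ is an elementary divisor ring if every matrix $A$ over $R$ admits invertible $P,Q$ with $PAQ$ a diagonal matrix $\mathrm{diag}(d_1,\dots,d_r,0,\dots,0)$ with $d_i\mid d_{i+1}$. *)

From HB Require Import structures.
From mathcomp Require Import all_boot all_order all_algebra.
Set Implicit Arguments. Unset Strict Implicit. Unset Printing Implicit Defensive.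
Import Order.TTheory GRing.Theory Num.Theory.
Local Open Scope ring_scope.

Definition rdvd (R : comNzRingType) (a b : R) : Prop := exists c : R, b = c * a.

Definition rcoprime (R : comUnitRingType) (a b : R) : Prop :=
  forall d : R, rdvd d a -> rdvd d b -> d \is a GRing.unit.

Definition in_fg_ideal (R : comNzRingType) (s : seq R) (x : R) : Prop :=
  exists cs : seq R, size cs = size s /\
    x = \sum_(i < size s) cs`_i * s`_i.

Definition bezout_domain (R : idomainType) : Prop :=
  forall s : seq R, exists d : R, forall x : R, in_fg_ideal s x <-> rdvd d x.

(* D is of the form diag(d_1, ..., d_k) (rectangular) with d_i | d_(i+1);
   the chain condition forces the shape diag(d_1,..,d_r,0,..,0). *)
Definition smith_diag (R : comNzRingType) (m n : nat) (D : 'M[R]_(m, n)) : Prop :=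
  (forall (i : 'I_m) (j : 'I_n), (i : nat) <> j -> D i j = 0) /\
  (forall (i i' : 'I_m) (j j' : 'I_n),
      (i : nat) = j -> (i' : nat) = j' -> (i' : nat) = i.+1 ->
      rdvd (D i j) (D i' j')).

Definition elementary_divisor_ring (R : comUnitRingType) : Prop :=
  forall (m n : nat) (A : 'M[R]_(m, n)),
    exists (P : 'M[R]_m) (Q : 'M[R]_n),
      P \in unitmx /\ Q \in unitmx /\ smith_diag (P *m A *m Q).

From HB Require Import structures.
From mathcomp Require Import all_boot all_order all_algebra.
From mathcomp Require Import ring zify.
Set Implicit Arguments. Unset Strict Implicit. Unset Printing Implicit Defensive.
Import GRing.Theory.
Local Open Scope ring_scope.

(* Following Kaplansky, it suffices to show that both conditions are equivalent to:
   whenever (a, b, c) = 1 there are p, q with (pa, pb + qc) = 1.  The matrix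
   condition implies it by reading off the unit corner of the Smith form of
   [[a, b], [0, c]].  Conversely, after dividing out the gcd of its entries a matrix
   is primitive, and a primitive matrix is equivalent to one with a unit corner: for
   2x2 matrices by Kaplansky's condition, and for larger ones by induction on the
   number of rows (and columns, by transposition).  Clearing the row and column of a
   unit corner and recursing yields the Smith form.  The equivalence with the
   coprime-splitting condition of the theorem is an explicit Bezout computation. *)

Section Comaximal.
Variable R : comNzRingType.
Implicit Types c g x y z : R.

Lemma rdvd0 g : rdvd g 0.
Proof. by exists 0; rewrite mul0r. Qed.

Lemma rdvdD g x y : rdvd g x -> rdvd g y -> rdvd g (x + y).
Proof. by case=> a -> [b ->]; exists (a + b); rewrite mulrDl. Qed.

Lemma rdvdMl g c x : rdvd g x -> rdvd g (c * x).
Proof. by case=> a ->; exists (c * a); rewrite mulrA. Qed.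

Definition comaximal x y := exists u v : R, u * x + v * y = 1.

Lemma comaximalC x y : comaximal x y -> comaximal y x.
Proof. by case=> u [v h]; exists v, u; rewrite addrC. Qed.

Lemma comaximalMl x y z : comaximal x z -> comaximal y z -> comaximal (x * y) z.
Proof.
case=> u [v h1] [u' [v' h2]].
exists (u * u'), (u * x * v' + v * u' * y + v * v' * z).
by rewrite -[RHS](mulr1 1) -{1}h1 -h2; ring.
Qed.

Lemma comaximalMr x y z : comaximal x y -> comaximal x z -> comaximal x (y * z).
Proof. by move=> /comaximalC hxy /comaximalC hxz; apply/comaximalC/comaximalMl. Qed.

Definition kaplansky_condition := forall a b c : R,
  (exists x y z, x * a + y * b + z * c = 1) ->
  exists p q, comaximal (p * a) (p * b + q * c).

End Comaximal.

Section Coprime.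
Variable R : comUnitRingType.
Implicit Types a b d : R.

Lemma rdvd1_unit d : rdvd d 1 -> d \is a GRing.unit.
Proof. by case=> c h; apply/unitrPr; exists c; rewrite mulrC -h. Qed.

Lemma comaximal_rcoprime a b : comaximal a b -> rcoprime a b.
Proof.
case=> u [v huv] d [c1 ea] [c2 eb]; apply: rdvd1_unit.
by exists (u * c1 + v * c2); rewrite -huv ea eb; ring.
Qed.

Definition coprime_split_condition := forall a1 a2 b1 b2 : R,
  rcoprime a1 a2 -> rcoprime b1 b2 ->
  exists r : R, exists alpha beta : R,
    b1 + r * b2 = alpha * beta /\
    rcoprime alpha beta /\ rcoprime a1 alpha /\ rcoprime a2 beta.

End Coprime.

Section Bezout.
Variable R : idomainType.
Hypothesis hB : bezout_domain R.
Implicit Types a b c : R.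

Lemma bezout2 a b : exists g u v, rdvd g a /\ rdvd g b /\ g = u * a + v * b.
Proof.
have [d hd] := hB [:: a; b].
have [cs [_ hds]] : in_fg_ideal [:: a; b] d by apply/hd; exists 1; rewrite mul1r.
exists d, cs`_0, cs`_1; split; [|split].
- by apply/hd; exists [:: 1; 0]; split => //; rewrite !big_ord_recl big_ord0 /=; ring.
- by apply/hd; exists [:: 0; 1]; split => //; rewrite !big_ord_recl big_ord0 /=; ring.
- by rewrite hds !big_ord_recl big_ord0 /=; ring.
Qed.

Lemma rcoprime_comaximal a b : rcoprime a b -> comaximal a b.
Proof.
move=> hab; have [g [u [v [ga [gb eg]]]]] := bezout2 a b.
have /unitrP [y [hy _]] := hab _ ga gb.
by exists (y * u), (y * v); rewrite -hy eg; ring.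
Qed.

Lemma factor_gcd2 b c : exists d b' c', b = d * b' /\ c = d * c' /\ comaximal b' c'.
Proof.
have [g [u [v [[k1 e1] [[k2 e2] eg]]]]] := bezout2 b c.
have [g0|gn0] := eqVneq g 0.
  exists 0, 1, 0; rewrite e1 e2 g0 !mulr0 !mul0r; do 2!split => //.
  by exists 1, 0; ring.
exists g, k1, k2; rewrite e1 e2 ![g * _]mulrC; do 2!split => //.
by exists u, v; apply: (mulIf gn0); rewrite mul1r [RHS]eg e1 e2; ring.
Qed.

Lemma coprime_split_of_kaplansky : kaplansky_condition R -> coprime_split_condition R.
Proof.
move=> hK a1 a2 b1 b2 /rcoprime_comaximal [s [t hst]] /rcoprime_comaximal [s' [t' hst']].
have [p [q [u [v hpq]]]] : exists p q, comaximal (p * a1) (p * (a2 * b1) + q * (a2 * b2)).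
  apply: hK; exists s, (t * s'), (t * t').
  by rewrite -hst -[in RHS](mulr1 (t * a2)) -hst'; ring.
(* alpha := p b1 + q b2 and beta := an inverse of p modulo b2 a2 alpha *)
set m := p * b1 + q * b2.
have hp_b2 : comaximal p b2 by exists (u * a1 + v * a2 * b1), (v * a2 * q); rewrite -hpq; ring.
have hp_a2m : comaximal p (a2 * m) by exists (u * a1), v; rewrite -hpq /m; ring.
have [p' [k hk]] := comaximalMr hp_b2 hp_a2m.
exists (p' * q - k * a2 * m * b1), m, p'; split; [|split; [|split]].
- by rewrite -{1}[b1]mul1r -hk /m; ring.
- by apply: comaximal_rcoprime; exists (k * b2 * a2), p; rewrite -hk; ring.
- by apply: comaximal_rcoprime; exists (u * p), (v * a2); rewrite -hpq /m; ring.
- by apply: comaximal_rcoprime; exists (k * b2 * m), p; rewrite -hk; ring.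
Qed.

Lemma kaplansky_of_coprime_split : coprime_split_condition R -> kaplansky_condition R.
Proof.
move=> hS a b c [x [y [z hxyz]]].
have [d [b' [c' [eb [ec hbc']]]]] := factor_gcd2 b c.
rewrite {}eb {}ec in hxyz *.
have had : comaximal a d by exists x, (y * b' + z * c'); rewrite -hxyz; ring.
have [r [al [be [hr [/rcoprime_comaximal hab [/rcoprime_comaximal haa /rcoprime_comaximal hdb]]]]]] :=
  hS a d b' c' (comaximal_rcoprime had) (comaximal_rcoprime hbc').
have eb' : b' = al * be - r * c' by rewrite -hr; ring.
have hbe_c' : comaximal be c'.
  by case: hbc' => u [v huv]; exists (u * al), (v - u * r); rewrite -huv eb'; ring.
(* p inverts beta modulo c' alpha d, which makes p b + q c = d alpha *)
have [p [w hp]] : comaximal be (c' * al * d).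
  apply: comaximalMr; last exact: comaximalC.
  by apply: comaximalMr => //; apply: comaximalC.
exists p, (w * al * al * d + p * r).
have -> : p * (d * b') + (w * al * al * d + p * r) * (d * c') = d * al.
  by rewrite eb' -[RHS]mulr1 -hp; ring.
apply: comaximalMl; first by exists be, (w * c'); rewrite -hp; ring.
exact: comaximalMr had haa.
Qed.

End Bezout.

Section Matrices.
Variable R : comNzRingType.

Definition entry_span m n (M : 'M[R]_(m, n)) (x : R) :=
  exists C : 'M[R]_(m, n), x = \sum_i \sum_j C i j * M i j.

Lemma entry_span0 m n (M : 'M[R]_(m, n)) : entry_span M 0.
Proof. by exists 0; rewrite big1 // => i _; rewrite big1 // => j _; rewrite mxE mul0r. Qed.

Lemma entry_spanD m n (M : 'M[R]_(m, n)) x y :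
  entry_span M x -> entry_span M y -> entry_span M (x + y).
Proof.
case=> C1 -> [C2 ->]; exists (C1 + C2); rewrite -big_split; apply: eq_bigr => i _.
by rewrite -big_split; apply: eq_bigr => j _; rewrite mxE mulrDl.
Qed.

Lemma entry_spanMl m n (M : 'M[R]_(m, n)) c x : entry_span M x -> entry_span M (c * x).
Proof.
case=> C ->; exists (c *: C); rewrite mulr_sumr; apply: eq_bigr => i _.
by rewrite mulr_sumr; apply: eq_bigr => j _; rewrite mxE mulrA.
Qed.

Lemma entry_span_sum m n (M : 'M[R]_(m, n)) (I : Type) (r : seq I) (P : pred I) F :
  (forall i, P i -> entry_span M (F i)) -> entry_span M (\sum_(i <- r | P i) F i).
Proof. by move=> h; apply: big_ind => //; [exact: entry_span0 | exact: entry_spanD]. Qed.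

Lemma entry_span_entry m n (M : 'M[R]_(m, n)) i j : entry_span M (M i j).
Proof.
exists (delta_mx i j); rewrite (bigD1 i) //= (bigD1 j) //= mxE !eqxx mul1r.
rewrite big1 ?addr0; last by move=> j' /negPf hj; rewrite mxE eqxx hj mul0r.
rewrite big1 ?addr0 // => i' /negPf hi; rewrite big1 // => j' _.
by rewrite mxE hi mul0r.
Qed.

Lemma entry_span_trans m n p q (M : 'M[R]_(m, n)) (N : 'M[R]_(p, q)) x :
  (forall i j, entry_span M (N i j)) -> entry_span N x -> entry_span M x.
Proof.
move=> h [C ->]; apply: entry_span_sum => i _; apply: entry_span_sum => j _.
exact: entry_spanMl.
Qed.

Lemma entry_span_mulmx m n p q (P : 'M[R]_(p, m)) (M : 'M[R]_(m, n)) (Q : 'M[R]_(n, q)) i j :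
  entry_span M ((P *m M *m Q) i j).
Proof.
rewrite mxE; apply: entry_span_sum => l _; rewrite mxE mulr_suml.
apply: entry_span_sum => k _; rewrite mulrAC; apply: entry_spanMl; exact: entry_span_entry.
Qed.

Lemma entry_span_tr m n (M : 'M[R]_(m, n)) x : entry_span M x -> entry_span M^T x.
Proof.
case=> C ->; exists C^T; rewrite exchange_big; apply: eq_bigr => i _.
by apply: eq_bigr => j _; rewrite !mxE.
Qed.

Lemma entry_span_rdvd m n (M : 'M[R]_(m, n)) g x :
  (forall i j, rdvd g (M i j)) -> entry_span M x -> rdvd g x.
Proof.
move=> h [C ->]; apply: big_ind => [|y z|i _]; [exact: rdvd0 | exact: rdvdD |].
apply: big_ind => [|y z|j _]; [exact: rdvd0 | exact: rdvdD | exact: rdvdMl].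
Qed.

Lemma big_ord2 (F : 'I_2 -> R) : \sum_(i < 2) F i = F 0 + F 1.
Proof.
rewrite !big_ord_recl big_ord0 addr0.
by have -> : lift ord0 ord0 = 1 :> 'I_2 by apply: val_inj.
Qed.

Definition mx22 (a b c d : R) : 'M[R]_2 :=
  \matrix_(i < 2, j < 2) if (i : nat) == 0%N then (if (j : nat) == 0%N then a else b)
                         else (if (j : nat) == 0%N then c else d).

Lemma mulmx2E m n (X : 'M[R]_(m, 2)) (Y : 'M[R]_(2, n)) i j :
  (X *m Y) i j = X i 0 * Y 0 j + X i 1 * Y 1 j.
Proof. by rewrite mxE big_ord2. Qed.

Lemma det_mx22 a b c d : \det (mx22 a b c d) = a * d - b * c.
Proof.
rewrite (expand_det_row _ 0) !big_ord_recl big_ord0 addr0 /cofactor !det_mx11 !mxE /=.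
by rewrite /bump /= expr0 expr1; ring.
Qed.

Lemma smith_diag_block m n d (D : 'M[R]_(m, n)) :
  smith_diag D -> (forall i j, rdvd d (D i j)) ->
  smith_diag (block_mx d%:M 0 0 D : 'M_(1 + m, 1 + n)).
Proof.
case=> hD0 hD1 hd; split.
  move=> i j; rewrite -(splitK i) -(splitK j).
  case: (split i) => [i0|i0]; case: (split j) => [j0|j0] /= hij.
  - by case: hij; rewrite (ord1 i0) (ord1 j0).
  - by rewrite block_mxEur mxE.
  - by rewrite block_mxEdl mxE.
  - by rewrite block_mxEdr; apply: hD0 => e; apply: hij; rewrite e.
move=> i i' j j'; rewrite -(splitK i) -(splitK j) -(splitK i') -(splitK j').
case: (split i) => [i0|i0]; case: (split j) => [j0|j0];
  case: (split i') => [i1|i1]; case: (split j') => [j1|j1] /= e1 e2 e3;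
  have := ltn_ord i0; have := ltn_ord j0; have := ltn_ord i1; have := ltn_ord j1;
  try lia; rewrite !block_mxEdr.
- by rewrite block_mxEul (ord1 i0) (ord1 j0) mxE eqxx mulr1n.
- by move=> *; apply: hD1; lia.
Qed.

End Matrices.

Section Equivalence.
Variable R : comUnitRingType.

Definition mx_equiv m n (A B : 'M[R]_(m, n)) :=
  exists P Q, P \in unitmx /\ Q \in unitmx /\ B = P *m A *m Q.

Lemma mx_equiv_refl m n (A : 'M[R]_(m, n)) : mx_equiv A A.
Proof. by exists 1%:M, 1%:M; rewrite !unitmx1 mul1mx mulmx1. Qed.

Lemma mx_equiv_sym m n (A B : 'M[R]_(m, n)) : mx_equiv A B -> mx_equiv B A.
Proof.
case=> P [Q [uP [uQ ->]]]; exists (invmx P), (invmx Q); rewrite !unitmx_inv uP uQ.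
by rewrite !mulmxA mulVmx // mul1mx mulmxK.
Qed.

Lemma mx_equiv_trans m n (A B C : 'M[R]_(m, n)) :
  mx_equiv A B -> mx_equiv B C -> mx_equiv A C.
Proof.
case=> P [Q [uP [uQ ->]]] [P' [Q' [uP' [uQ' ->]]]].
by exists (P' *m P), (Q *m Q'); rewrite !unitmx_mul uP uQ uP' uQ' !mulmxA.
Qed.

Lemma mx_equiv_tr m n (A B : 'M[R]_(m, n)) : mx_equiv A B -> mx_equiv A^T B^T.
Proof.
case=> P [Q [uP [uQ ->]]]; exists Q^T, P^T; rewrite !unitmx_tr.
by rewrite !trmx_mul mulmxA.
Qed.

Lemma mx_equivZ m n a (A B : 'M[R]_(m, n)) : mx_equiv A B -> mx_equiv (a *: A) (a *: B).
Proof. by case=> P [Q [uP [uQ ->]]]; exists P, Q; rewrite -scalemxAr -scalemxAl. Qed.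

Lemma unitmx_block_diag m n (P : 'M[R]_m) (Q : 'M[R]_n) :
  (block_mx P 0 0 Q \in unitmx) = (P \in unitmx) && (Q \in unitmx).
Proof. by rewrite !unitmxE det_ublock unitrM. Qed.

Lemma mx_equiv_block_diag m n (a : 'M[R]_1) (B B' : 'M[R]_(m, n)) :
  mx_equiv B B' -> mx_equiv (block_mx a 0 0 B) (block_mx a 0 0 B').
Proof.
case=> P [Q [uP [uQ ->]]]; exists (block_mx 1%:M 0 0 P), (block_mx 1%:M 0 0 Q).
rewrite !unitmx_block_diag !unitmx1 uP uQ; do 2!split => //.
by rewrite !mulmx_block !mul1mx !mulmx1 !mul0mx ?mulmx0 ?addr0 ?add0r mul0mx.
Qed.

Lemma mx_equiv_entry_span m n (A B : 'M[R]_(m, n)) x :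
  mx_equiv A B -> entry_span B x -> entry_span A x.
Proof. by case=> P [Q [_ [_ ->]]]; apply: entry_span_trans => i j; exact: entry_span_mulmx. Qed.

Lemma unitmx22 (a b c d : R) : a * d - b * c = 1 -> mx22 a b c d \in unitmx.
Proof. by move=> h; rewrite unitmxE det_mx22 h unitr1. Qed.

Definition primitive_mx m n (M : 'M[R]_(m, n)) := entry_span M 1.

Lemma primitive_equiv m n (A B : 'M[R]_(m, n)) :
  mx_equiv A B -> primitive_mx A -> primitive_mx B.
Proof. by move/mx_equiv_sym; exact: mx_equiv_entry_span. Qed.

Definition unit_corner m n (A : 'M[R]_(m.+1, n.+1)) :=
  exists B, mx_equiv A B /\ B 0 0 \is a GRing.unit.

Lemma unit_corner_equiv m n (A B : 'M[R]_(m.+1, n.+1)) :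
  mx_equiv A B -> unit_corner B -> unit_corner A.
Proof. by move=> eAB [C [eBC uC]]; exists C; split => //; exact: mx_equiv_trans eBC. Qed.

Lemma unit_corner_tr m n (A : 'M[R]_(m.+1, n.+1)) : unit_corner A^T -> unit_corner A.
Proof.
case=> B [/mx_equiv_tr eB uB]; exists B^T; rewrite mxE; split => //.
by rewrite trmxK in eB.
Qed.

Lemma unit_corner_usubmx k l n (X : 'M[R]_(k.+1 + l, n.+1)) :
  unit_corner (usubmx X) -> unit_corner X.
Proof.
case=> _ [[P [Q [uP [uQ ->]]]] u00].
have uPl : (block_mx P 0 0 1%:M : 'M_(k.+1 + l)) \in unitmx.
  by rewrite unitmx_block_diag uP unitmx1.
exists (block_mx P 0 0 1%:M *m X *m Q); split; first by exists (block_mx P 0 0 1%:M), Q.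
rewrite -[X in block_mx _ _ _ _ *m X](vsubmxK X) mul_block_col !mul0mx addr0 mul_col_mx.
have -> : (0 : 'I_(k.+1 + l)) = lshift l 0 by apply: val_inj.
by rewrite (col_mxEu (P *m usubmx X *m Q)).
Qed.

Lemma unit_corner_mx1 (A : 'M[R]_1) : primitive_mx A -> unit_corner A.
Proof.
case=> C; rewrite !big_ord1 => e; exists A; split; first exact: mx_equiv_refl.
by apply/unitrPr; exists (C 0 0); rewrite mulrC e.
Qed.

Lemma unit_corner_col2 (A : 'M[R]_(2, 1)) : primitive_mx A -> unit_corner A.
Proof.
case=> C; rewrite big_ord2 !big_ord1 => e.
set P := mx22 (C 0 0) (C 1 0) (- A 1 0) (A 0 0).
have uP : P \in unitmx by apply: unitmx22; rewrite e; ring.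
exists (P *m A *m 1%:M); split; first by exists P, 1%:M; rewrite unitmx1.
by rewrite mulmx1 mulmx2E !mxE /= -e unitr1.
Qed.

Lemma block_pivot_equiv m n (u : R) (w : 'M[R]_(1, n)) (v : 'M[R]_(m, 1)) (W : 'M[R]_(m, n)) :
  u \is a GRing.unit ->
  mx_equiv (block_mx u%:M w v W) (block_mx u%:M 0 0 (W - u^-1 *: (v *m w))).
Proof.
move=> uu; exists (block_mx 1%:M 0 (- (u^-1 *: v)) 1%:M), (block_mx 1%:M (- (u^-1 *: w)) 0 1%:M).
rewrite !unitmxE det_lblock det_ublock !det1 !mulr1 unitr1; do 2!split => //.
rewrite !mulmx_block !mul1mx !mul0mx !mulmx1 !mulmx0 ?addr0 ?add0r.
rewrite mul_scalar_mx mul_mx_scalar !scalerN !scalerA mulrV // scale1r !addNr.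
by rewrite scale1r addNr mul0mx add0r mulNmx -scalemxAl addrC.
Qed.

Lemma unit_corner_block m n (C : 'M[R]_(1 + m, 1 + n)) : C 0 0 \is a GRing.unit ->
  exists W, mx_equiv C (block_mx (C 0 0)%:M 0 0 W).
Proof.
move=> uC; have eC : C = block_mx (C 0 0)%:M (ursubmx C) (dlsubmx C) (drsubmx C).
  rewrite -{1}[C]submxK; congr block_mx; apply/matrixP => i j.
  rewrite (ord1 i) (ord1 j) !mxE eqxx mulr1n.
  by congr (C _ _); apply: val_inj.
by eexists; rewrite {1}eC; apply: block_pivot_equiv.
Qed.

End Equivalence.

Section BezoutMatrices.
Variable R : idomainType.
Hypothesis hB : bezout_domain R.

Lemma bezout_family (I : eqType) (f : I -> R) (r : seq I) : uniq r ->
  exists g (c : I -> R), g = \sum_(i <- r) c i * f i /\ forall i, i \in r -> rdvd g (f i).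
Proof.
elim: r => [_|i r IH /= /andP [ni ur]]; first by exists 0, (fun _ => 0); rewrite big_nil.
have [g [c [eg hg]]] := IH ur.
have [h [u [v [hi [[k hk] eh]]]]] := bezout2 hB (f i) g.
exists h, (fun j => if j == i then u else v * c j); split.
  rewrite big_cons eqxx eh eg mulr_sumr; congr (_ + _).
  apply: eq_big_seq => j jr; rewrite mulrA.
  by case: eqP jr => // ->; rewrite (negPf ni).
move=> j; rewrite inE => /orP [/eqP -> //|/hg [k' ->]].
by exists (k' * k); rewrite hk mulrA.
Qed.

Lemma mx_content_factor m n (A : 'M[R]_(m.+1, n.+1)) :
  exists g A', A = g *: A' /\ primitive_mx A'.
Proof.
have [g [c [eg hg]]] :=
  bezout_family (fun ij => A ij.1 ij.2) (index_enum_uniq ('I_m.+1 * 'I_n.+1)%type).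
have [g0|gn0] := eqVneq g 0.
  exists 0, (const_mx 1); rewrite scale0r; split; last first.
    by have := entry_span_entry (const_mx 1 : 'M[R]_(m.+1, n.+1)) 0 0; rewrite mxE.
  apply/matrixP => i j; have [k ->] := hg (i, j) (mem_index_enum _).
  by rewrite g0 mulr0 mxE.
have [f hf] := fin_all_exists (fun ij => hg ij (mem_index_enum ij)).
exists g, (\matrix_(i, j) f (i, j)).
have eA : A = g *: \matrix_(i, j) f (i, j).
  by apply/matrixP => i j; rewrite !mxE [LHS](hf (i, j)) mulrC.
split => //; exists (\matrix_(i, j) c (i, j)); apply: (mulIf gn0).
rewrite mul1r [LHS]eg pair_bigA mulr_suml /=; apply: eq_bigr => [[i j]] _.
by rewrite !mxE [A i j](hf (i, j)) mulrA.
Qed.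

Lemma unit_corner_rows n :
  (forall A : 'M[R]_(2, n.+1), primitive_mx A -> unit_corner A) ->
  forall m (A : 'M[R]_(m.+2, n.+1)), primitive_mx A -> unit_corner A.
Proof.
move=> corner2; elim=> [|m IH]; first exact: corner2.
change (forall A : 'M[R]_(1 + m.+2, n.+1), primitive_mx A -> @unit_corner R m.+2 n A).
move=> A pA; have [a [B eA]] : exists a B, A = col_mx a B.
  by exists (usubmx A), (dsubmx A); rewrite vsubmxK.
have [g [B' [eB pB']]] := mx_content_factor B.
have [C [[P [Q [uP [uQ eC]]]] uC]] := IH B' pB'.
pose X : 'M_(1 + m.+2, n.+1) := col_mx (a *m Q) (g *: C).
have eqX : mx_equiv A X.
  exists (block_mx 1%:M 0 0 P), Q; rewrite unitmx_block_diag unitmx1 uP uQ; do 2!split => //.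
  rewrite /X eA eB eC mul_block_col mul1mx !mul0mx addr0 add0r mul_col_mx.
  by rewrite -scalemxAr -scalemxAl.
(* The content g of the lower block sits in row 1 of X up to a unit, so the first two
   rows of X span all its entries. *)
apply: (unit_corner_equiv eqX); apply: (@unit_corner_usubmx _ 1 m.+1 n); apply: corner2.
set S := usubmx _.
have S0 j : S 0 j = X (lshift m.+2 0) j by rewrite mxE; congr (X _ _); apply: val_inj.
have S1 j : S 1 j = X (rshift 1 0) j by rewrite mxE; congr (X _ _); apply: val_inj.
apply: (entry_span_trans _ (primitive_equiv eqX pA)) => i j.
rewrite -(splitK i); case: (split i) => i0 /=.
  by rewrite (ord1 i0) -S0; exact: entry_span_entry.
have -> : X (rshift 1 i0) j = (C 0 0)^-1 * C i0 j * S 1 0.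
  by rewrite S1 !col_mxEd !mxE mulrCA mulrAC mulVr // mul1r.
by apply: entry_spanMl; exact: entry_span_entry.
Qed.

End BezoutMatrices.

Section Kaplansky.
Variable R : idomainType.
Hypothesis hB : bezout_domain R.
Hypothesis hK : kaplansky_condition R.

Lemma unit_corner_mx2 (A : 'M[R]_2) : primitive_mx A -> unit_corner A.
Proof.
move=> pA; have [g [a' [c' [ea [ec [s [t hst]]]]]]] := factor_gcd2 hB (A 0 0) (A 1 0).
set T := mx22 s t (- c') a' *m A *m 1%:M.
have eqT : mx_equiv A T.
  by exists (mx22 s t (- c') a'), 1%:M; rewrite unitmx1 unitmx22 // -hst; ring.
have T00 : T 0 0 = g by rewrite /T mulmx1 mulmx2E !mxE /= ea ec -[RHS]mulr1 -hst; ring.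
have T10 : T 1 0 = 0 by rewrite /T mulmx1 mulmx2E !mxE /= ea ec; ring.
clearbody T.
have [C] := primitive_equiv eqT pA; rewrite !big_ord2 T00 T10 => eC.
have [p [q [u [v huv]]]] : exists p q, comaximal (p * g) (p * T 0 1 + q * T 1 1).
  by apply: hK; exists (C 0 0), (C 0 1), (C 1 1); rewrite eC; ring.
(* The unimodular row (p, q) and column (u, v) are completed to invertible matrices. *)
set L := mx22 p q (- (v * T 1 1)) (u * g + v * T 0 1).
set Rt := mx22 u (- (p * T 0 1 + q * T 1 1)) v (p * g).
have uL : L \in unitmx by apply: unitmx22; rewrite -huv; ring.
have uRt : Rt \in unitmx by apply: unitmx22; rewrite -huv; ring.
apply: (unit_corner_equiv eqT); exists (L *m T *m Rt); split; first by exists L, Rt.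
suff -> : (L *m T *m Rt) 0 0 = 1 by exact: unitr1.
by rewrite !mulmx2E !mxE /= T00 T10 -huv; ring.
Qed.

Lemma primitive_unit_corner m n (A : 'M[R]_(m.+1, n.+1)) : primitive_mx A -> unit_corner A.
Proof.
have row_of_col k (corner : forall m (A : 'M[R]_(m.+1, k.+1)), primitive_mx A -> unit_corner A)
    l (B : 'M[R]_(k.+1, l.+1)) : primitive_mx B -> unit_corner B.
  by move=> /entry_span_tr pB; apply: unit_corner_tr; exact: corner.
have col1 k (B : 'M[R]_(k.+1, 1)) : primitive_mx B -> unit_corner B.
  case: k B => [|k] B; first exact: unit_corner_mx1.
  exact: (@unit_corner_rows R hB 0 (@unit_corner_col2 R)).
have col2 k (B : 'M[R]_(k.+1, 2)) : primitive_mx B -> unit_corner B.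
  case: k B => [|k] B; first exact: (row_of_col 0 col1).
  exact: (@unit_corner_rows R hB 1 unit_corner_mx2).
case: m A => [|m] A; first exact: (row_of_col 0 col1).
exact: (@unit_corner_rows R hB n (row_of_col 1 col2 n)).
Qed.

Lemma corner_block_equiv m n (A : 'M[R]_(1 + m, 1 + n)) :
  exists d B, mx_equiv A (block_mx d%:M 0 0 B) /\ forall i j, rdvd d (B i j).
Proof.
have [g [A' [-> pA']]] := mx_content_factor hB A.
have [C [eqC uC]] := primitive_unit_corner pA'.
have [W eqW] := unit_corner_block uC.
exists (g * C 0 0), (g *: W); split.
  have := mx_equivZ g eqW; rewrite scale_block_mx scale_scalar_mx !scaler0.
  exact: mx_equiv_trans (mx_equivZ g eqC).
by move=> i j; exists (W i j * (C 0 0)^-1); rewrite mxE [g * C 0 0]mulrC mulrA mulrVK // mulrC.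
Qed.

Lemma smith_of_kaplansky m n (A : 'M[R]_(m, n)) : exists D, mx_equiv A D /\ smith_diag D.
Proof.
elim: m n A => [|m IH] [|n] A; try by exists A; split; [exact: mx_equiv_refl | split=> [[]|[]]].
  by exists A; split; [exact: mx_equiv_refl | split=> [? []|? ? []]].
have [d [B [eqA hd]]] := corner_block_equiv (A : 'M_(1 + m, 1 + n)).
have [D [eqB sD]] := IH n B.
exists (block_mx (d%:M : 'M_1) 0 0 D); split.
  exact: mx_equiv_trans eqA (mx_equiv_block_diag _ eqB).
apply: smith_diag_block => // i j; case: eqB => P [Q [_ [_ ->]]].
exact: entry_span_rdvd hd (entry_span_mulmx _ _ _ i j).
Qed.

Lemma edr_of_kaplansky : elementary_divisor_ring R.
Proof.
move=> m n A; have [_ [[P [Q [uP [uQ ->]]]] sD]] := smith_of_kaplansky A.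
by exists P, Q.
Qed.

End Kaplansky.

Lemma kaplansky_of_edr (R : comUnitRingType) :
  elementary_divisor_ring R -> kaplansky_condition R.
Proof.
move=> hE a b c [x [y [z hxyz]]].
have [P [Q [uP [uQ [sD0 sD1]]]]] := hE 2%N 2%N (mx22 a b 0 c).
set D := P *m _ *m Q in sD0 sD1.
have eqD : mx_equiv (mx22 a b 0 c) D by exists P, Q.
have ord2 (k : 'I_2) : k = 0 \/ k = 1 by case: k => [[|[|//]] ?]; [left | right]; apply: val_inj.
have dvdD i j : rdvd (D 0 0) (D i j).
  have [->|->] := ord2 i; have [->|->] := ord2 j.
  - by exists 1; rewrite mul1r.
  - by rewrite (sD0 0 1) //; exact: rdvd0.
  - by rewrite (sD0 1 0) //; exact: rdvd0.
  - exact: (sD1 0 1 0 1).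
have dvdA i j : rdvd (D 0 0) (mx22 a b 0 c i j).
  exact: entry_span_rdvd dvdD (mx_equiv_entry_span (mx_equiv_sym eqD) (entry_span_entry _ i j)).
have [k hk] : rdvd (D 0 0) 1.
  rewrite -hxyz; apply: rdvdD; [apply: rdvdD|]; apply: rdvdMl.
  - by have := dvdA 0 0; rewrite [mx22 _ _ _ _ _ _]mxE.
  - by have := dvdA 0 1; rewrite [mx22 _ _ _ _ _ _]mxE.
  - by have := dvdA 1 1; rewrite [mx22 _ _ _ _ _ _]mxE.
exists (P 0 0), (P 0 1), (k * Q 0 0), (k * Q 1 0).
by rewrite hk /D !mulmx2E !mxE /=; ring.
Qed.

Theorem theorem2p13 (R : idomainType) (hB : bezout_domain R) :
  elementary_divisor_ring R <->
  (forall a1 a2 b1 b2 : R, rcoprime a1 a2 -> rcoprime b1 b2 ->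
     exists r : R, exists alpha beta : R,
       b1 + r * b2 = alpha * beta /\
       rcoprime alpha beta /\ rcoprime a1 alpha /\ rcoprime a2 beta).
Proof.
split=> [/kaplansky_of_edr | /(kaplansky_of_coprime_split hB)].
  exact: coprime_split_of_kaplansky.
exact: edr_of_kaplansky.
Qed.
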